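(* For a no-slip billiard system in a general billiard domain $\mathcal{B}\subset\mathbb{R}^n$ (not necessarily a cylinder), if the pre-collision state $(a,u,U)$ at a regular boundary point $a$ satisfies the rolling impact condition, then the post-collision state is given by $$C_a(u,U)=\big(u-2(u\cdot\nu_a)\nu_a,\ U\big),$$ i.e. the center-of-mass velocity is reflected specularly and the angular velocity matrix is unchanged.
   Context: The particle is a ball of radius $r>0$ with rotationally symmetric mass distribution of total mass $m$ and second-moment matrix per unit mass $\lambda I$, $\lambda=(r\gamma)^2/2$, $\gamma>0$; $c=\frac{1-\gamma^2}{1+\gamma^2}$, $s=\frac{2\gamma}{1+\gamma^2}$; for $a,b\in\mathbb{R}^n$, $a\wedge b\in\mathfrak{so}(n)$ is $(a\wedge b)x=(a\cdot x)b-(b\cdot x)a$. $\mathcal{B}$ is the set of admissible centers, $\nu_a$ the unit normal at $a\in\partial\mathcal{B}$ pointing into $\mathcal{B}$. A state is $(a,u,U)$, $u$ the center-of-mass velocity, $U\in\mathfrak{so}(n)$ the angular velocity matrix. The no-slip collision map is $C_a(u,U)=\big(cu-\tfrac{s}{\gamma}(u\cdot\nu_a)\nu_a+s\gamma rU\nu_a,\ \tfrac{s}{\gamma r}\nu_a\wedge u+U-\tfrac{s}{\gamma}\nu_a\wedge U\nu_a\big)$. The pre-collision state $(a,u,U)$ satisfies the rolling impact condition if the orthogonal projection of $v=u-rU\nu_a$ onto $T_a\partial\mathcal{B}$ is zero. *)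

(* Vectors of R^n are column vectors 'cV[R]_n,
   elements of so(n) are n x n matrices acting on column vectors. *)
From mathcomp Require Import all_boot all_order all_algebra.
Set Implicit Arguments. Unset Strict Implicit. Unset Printing Implicit Defensive.
Import Order.TTheory GRing.Theory Num.Theory.
Local Open Scope ring_scope.

Section NoSlip.
Variables (R : realFieldType) (n : nat).

Definition dotv (x y : 'cV[R]_n) : R := \sum_(i < n) x i 0 * y i 0.

Definition is_so (U : 'M[R]_n) : Prop := U^T = - U.

(* a /\ b in so(n), (a /\ b) x = (a . x) b - (b . x) a *)
Definition wedge (a b : 'cV[R]_n) : 'M[R]_n := b *m a^T - a *m b^T.

(* Tangent space T_a dB at a regular boundary point with unit normal nu:
   the orthogonal complement of nu. *)
Definition tangent_space (nu : 'cV[R]_n) : 'cV[R]_n -> Prop :=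
  fun x => dotv x nu = 0.

(* Orthogonal projection onto nu^perp, for a unit vector nu. *)
Definition proj_tangent (nu v : 'cV[R]_n) : 'cV[R]_n := v - dotv v nu *: nu.

Definition cgam (gamma : R) : R := (1 - gamma ^+ 2) / (1 + gamma ^+ 2).
Definition sgam (gamma : R) : R := (2 * gamma) / (1 + gamma ^+ 2).

Definition collision (r gamma : R) (nu : 'cV[R]_n) (u : 'cV[R]_n) (U : 'M[R]_n)
  : 'cV[R]_n * 'M[R]_n :=
  ( cgam gamma *: u - (sgam gamma / gamma * dotv u nu) *: nu
      + (sgam gamma * gamma * r) *: (U *m nu),
    (sgam gamma / (gamma * r)) *: wedge nu u + U
      - (sgam gamma / gamma) *: wedge nu (U *m nu) ).

Definition rolling_impact (r : R) (nu : 'cV[R]_n) (u : 'cV[R]_n) (U : 'M[R]_n)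
  : Prop := proj_tangent nu (u - r *: (U *m nu)) = 0.

End NoSlip.

From mathcomp Require Import all_boot all_order all_algebra.
From mathcomp Require Import ring lra.
Set Implicit Arguments. Unset Strict Implicit. Unset Printing Implicit Defensive.
Import Order.TTheory GRing.Theory Num.Theory.
Local Open Scope ring_scope.

(* Skew-symmetry of U gives (U nu) . nu = 0, so the rolling impact condition
   says u = r U nu + (u . nu) nu.  Substituting this into C_a, the identities
   c + s gamma = 1 and c - s / gamma = -1 collapse the velocity component to
   r U nu - (u . nu) nu, and nu /\ u = r (nu /\ U nu) cancels the two wedge
   terms of the angular component. *)

Section Vectors.
Variables (R : realFieldType) (n : nat).
Implicit Types (x y nu : 'cV[R]_n) (U : 'M[R]_n) (k : R).

Lemma dotvE x y : dotv x y = (x^T *m y) 0 0.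
Proof. by rewrite /dotv mxE; apply: eq_bigr => i _; rewrite mxE. Qed.

Lemma dotvC x y : dotv x y = dotv y x.
Proof. by apply: eq_bigr => i _; rewrite mulrC. Qed.

Lemma dotvBl x y nu : dotv (x - y) nu = dotv x nu - dotv y nu.
Proof. by rewrite /dotv -sumrB; apply: eq_bigr => i _; rewrite !mxE mulrBl. Qed.

Lemma dotvZl k x nu : dotv (k *: x) nu = k * dotv x nu.
Proof. by rewrite /dotv mulr_sumr; apply: eq_bigr => i _; rewrite !mxE mulrA. Qed.

Lemma dotv_skew U x : is_so U -> dotv (U *m x) x = 0.
Proof.
move=> skU; set d := dotv _ _.
have d_opp : d = - d.
  have skT : (x^T *m (U *m x))^T = - (x^T *m (U *m x)).
    by rewrite !trmx_mul trmxK skU mulmxN mulNmx mulmxA.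
  move/matrixP/(_ 0 0): skT; rewrite mxE [X in _ = X]mxE -dotvE.
  by rewrite /d dotvC.
lra.
Qed.

Lemma wedgevv x : wedge x x = 0.
Proof. exact: subrr. Qed.

Lemma wedgeDr nu x y : wedge nu (x + y) = wedge nu x + wedge nu y.
Proof. by rewrite /wedge linearD mulmxDl mulmxDr opprD addrACA. Qed.

Lemma wedgeZr nu k x : wedge nu (k *: x) = k *: wedge nu x.
Proof. by rewrite /wedge linearZ -scalemxAl -scalemxAr scalerBr. Qed.

Lemma rolling_impact_decomposition r nu u U :
  is_so U -> rolling_impact r nu u U -> u = r *: (U *m nu) + dotv u nu *: nu.
Proof.
move=> skU; rewrite /rolling_impact /proj_tangent dotvBl dotvZl.
rewrite dotvC dotv_skew // mulr0 subr0 => /eqP.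
by rewrite -addrA -opprD subr_eq0 => /eqP.
Qed.

End Vectors.

Section Coefficients.
Variable (R : realFieldType).
Implicit Type gamma : R.

Lemma one_add_sqr_neq0 gamma : 1 + gamma ^+ 2 != 0.
Proof. by rewrite gt_eqF // ltr_pwDl // sqr_ge0. Qed.

Lemma cgam_add_sgamM gamma : cgam gamma + sgam gamma * gamma = 1.
Proof. by rewrite /cgam /sgam; field; rewrite one_add_sqr_neq0. Qed.

Lemma cgam_sub_sgamV gamma : gamma != 0 -> cgam gamma - sgam gamma / gamma = -1.
Proof. by move=> g_neq0; rewrite /cgam /sgam; field; rewrite g_neq0 one_add_sqr_neq0. Qed.

End Coefficients.

(* U nu = 0. *)
Theorem proposition6p1 (R : realFieldType) (n : nat) (r gamma : R)
  (nu u : 'cV[R]_n) (U : 'M[R]_n) :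
  0 < r -> 0 < gamma ->
  dotv nu nu = 1 ->
  is_so U ->
  rolling_impact r nu u U ->
  collision r gamma nu u U = (u - (2 * dotv u nu) *: nu, U).
Proof.
move=> r_gt0 g_gt0 _ skU roll.
have r_neq0 : r != 0 by rewrite gt_eqF.
have g_neq0 : gamma != 0 by rewrite gt_eqF.
move: (rolling_impact_decomposition skU roll); rewrite /collision.
move: (dotv u nu) (U *m nu) => a w ->; congr pair.
- apply/matrixP => i j; rewrite !mxE.
  set c := cgam gamma; set s := sgam gamma.
  transitivity ((c + s * gamma) * r * w i j + (c - s / gamma) * a * nu i j);
    first by ring.
  by rewrite cgam_add_sgamM cgam_sub_sgamV //; ring.
- rewrite wedgeDr !wedgeZr wedgevv scaler0 addr0 scalerA.
  rewrite invfM mulrA divfK //.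
  by rewrite addrC addKr.
Qed.
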